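(* Let $G=(X,\Sigma,\longrightarrow,X_0)$ and $R=(Z,\Sigma,\longrightarrow,Z_0)$ be automata and let $E$ be a $\Sigma_{ucr}$-controllability set from $G$ to $R$. Then $E^*=\bigcup_{\widetilde W\in E}\wp(\widetilde W)$ is a $\Sigma_{ucr}$-controllability set from $G$ to $R$. Moreover, for $E^*$ the sets $W'$ in clauses (a) and (b) can additionally be required to satisfy $W'\subseteq\bigcup_{(x,z)\in W}\{x':x\xrightarrow{\sigma}x'\}\times\{z':z\xrightarrow{\sigma}z'\}$; that is: for every $W\in E^*$ and $\sigma\in\Sigma_{uc}$ there is $W'\in E^*$ with $\mathit{match}_{G,R}(W,\sigma,W')$ and $W'$ contained in that set; and for every $W\in E^*$, $(x,z)\in W$, $\sigma\in\Sigma_r$ and $z'$ with $z\xrightarrow{\sigma}z'$ there exist $x'\in X$ and $W'\in E^*$ with $x\xrightarrow{\sigma}x'$, $(x',z')\in W'$, $\mathit{match}_{G,R}(W,\sigma,W')$ and $W'$ contained in that set.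
   Context: An automaton is a 4-tuple $A=(Q,\Sigma,\longrightarrow,Q_0)$ with state set $Q$, finite event set $\Sigma$, ${\longrightarrow}\subseteq Q\times\Sigma\times Q$ and $\emptyset\neq Q_0\subseteq Q$; write $q\xrightarrow{\sigma}q'$ for $(q,\sigma,q')\in{\longrightarrow}$. Events are partitioned into uncontrollable $\Sigma_{uc}$ and controllable $\Sigma_c$; $\Sigma_r\subseteq\Sigma$ is a fixed set of required events. For $W,W'\subseteq X\times Z$ and $\sigma\in\Sigma$, $\mathit{match}_{G,R}(W,\sigma,W')$ holds iff for all $(x,z)\in W$ and all $x'$ with $x\xrightarrow{\sigma}x'$ there is $z'$ with $z\xrightarrow{\sigma}z'$ and $(x',z')\in W'$. A set $E\subseteq\wp(X\times Z)$ is a $\Sigma_{ucr}$-controllability set from $G$ to $R$ if: (istate) there is $W_0\in E$ such that every $x_0\in X_0$ has some $z_0\in Z_0$ with $(x_0,z_0)\in W_0$; (a) for every $W\in E$ and $\sigma\in\Sigma_{uc}$ there is $W'\in E$ with $\mathit{match}_{G,R}(W,\sigma,W')$; (b) for every $W\in E$, $(x,z)\in W$, $\sigma\in\Sigma_r$ and $z'\in Z$ with $z\xrightarrow{\sigma}z'$, there exist $x'\in X$ and $W'\in E$ with $x\xrightarrow{\sigma}x'$, $(x',z')\in W'$ and $\mathit{match}_{G,R}(W,\sigma,W')$. *)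

From mathcomp Require Import all_boot.

Set Implicit Arguments.
Unset Strict Implicit.

Record automaton (Sigma : finType) := Automaton {
  state : Type;
  trans : state -> Sigma -> state -> Prop;
  init : state -> Prop;
  init_nonempty : exists q, init q
}.

Section Ctrl.
Variable Sigma : finType.
Variables (G R : automaton Sigma).

Definition relset := state G -> state R -> Prop.

Definition match_GR (W : relset) (s : Sigma) (W' : relset) : Prop :=
  forall x z, W x z -> forall x', trans x s x' ->
    exists z', trans z s z' /\ W' x' z'.

(* Sigma_ucr-controllability set; Suc = uncontrollable events, Sr = required events *)
Definition controllability_set (Suc Sr : pred Sigma) (E : relset -> Prop) : Prop :=
  (exists W0, E W0 /\ forall x0, init x0 -> exists z0, init z0 /\ W0 x0 z0) /\
  (forall W, E W -> forall s, Suc s -> exists W', E W' /\ match_GR W s W') /\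
  (forall W, E W -> forall x z, W x z -> forall s, Sr s -> forall z', trans z s z' ->
     exists x' W', trans x s x' /\ E W' /\ W' x' z' /\ match_GR W s W').

Definition Estar (E : relset -> Prop) : relset -> Prop :=
  fun W => exists Wt, E Wt /\ (forall x z, W x z -> Wt x z).

Definition succ_bounded (W : relset) (s : Sigma) (W' : relset) : Prop :=
  forall x' z', W' x' z' ->
    exists x z, W x z /\ trans x s x' /\ trans z s z'.
End Ctrl.

From mathcomp Require Import all_boot.

Set Implicit Arguments.
Unset Strict Implicit.

(* Given W in E* below some W~ in E, take the witness W' that E provides for W~
   and keep only its pairs reachable from W by a joint sigma-step.  Matching
   only uses those pairs, so the trimmed set still matches W, it is bounded by
   construction, and as a subset of W' it lies in E*. *)

Section Trimming.
Variables (Sigma : finType) (G R : automaton Sigma).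

Definition subrelset (W1 W2 : relset G R) : Prop := forall x z, W1 x z -> W2 x z.

Definition trim_succ (W : relset G R) (s : Sigma) (W' : relset G R) : relset G R :=
  fun x' z' => W' x' z' /\ exists x z, W x z /\ trans x s x' /\ trans z s z'.

Lemma trim_succ_sub W s W' : subrelset (trim_succ W s W') W'.
Proof. by move=> x' z' []. Qed.

Lemma succ_bounded_trim W s W' : succ_bounded W s (trim_succ W s W').
Proof. by move=> x' z' []. Qed.

Lemma match_GR_trim W Wt s W' :
  subrelset W Wt -> match_GR Wt s W' -> match_GR W s (trim_succ W s W').
Proof.
move=> sub_W match_Wt x z Wxz x' tx.
have [z' [tz W'xz]] := match_Wt x z (sub_W x z Wxz) x' tx.
by exists z'; split => //; split => //; exists x, z.
Qed.

Variable E : relset G R -> Prop.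

Lemma Estar_self W : E W -> Estar E W.
Proof. by move=> EW; exists W. Qed.

Lemma Estar_sub W W' : subrelset W' W -> E W -> Estar E W'.
Proof. by move=> sub_W EW; exists W. Qed.

Lemma Estar_bounded_match (Suc Sr : pred Sigma) :
  controllability_set Suc Sr E ->
  forall W, Estar E W -> forall s, Suc s ->
    exists W', Estar E W' /\ match_GR W s W' /\ succ_bounded W s W'.
Proof.
move=> [_ [uc_E _]] W [Wt [EWt sub_W]] s uc_s.
have [W' [EW' match_W']] := uc_E Wt EWt s uc_s.
exists (trim_succ W s W'); split; first exact: Estar_sub (@trim_succ_sub W s W') EW'.
split; [exact: match_GR_trim match_W' | exact: succ_bounded_trim].
Qed.

Lemma Estar_bounded_required (Suc Sr : pred Sigma) :
  controllability_set Suc Sr E ->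
  forall W, Estar E W -> forall x z, W x z -> forall s, Sr s ->
    forall z', trans z s z' ->
    exists x' W', trans x s x' /\ Estar E W' /\ W' x' z' /\
      match_GR W s W' /\ succ_bounded W s W'.
Proof.
move=> [_ [_ req_E]] W [Wt [EWt sub_W]] x z Wxz s r_s z' tz.
have [x' [W' [tx [EW' [W'xz match_W']]]]] :=
  req_E Wt EWt x z (sub_W x z Wxz) s r_s z' tz.
exists x', (trim_succ W s W'); split => //.
split; first exact: Estar_sub (@trim_succ_sub W s W') EW'.
split; first by split => //; exists x, z.
split; [exact: match_GR_trim match_W' | exact: succ_bounded_trim].
Qed.

End Trimming.

Theorem lemma1 (Sigma : finType) (Suc Sr : pred Sigma) (G R : automaton Sigma)
    (E : relset G R -> Prop) :
  controllability_set Suc Sr E ->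
  controllability_set Suc Sr (Estar E) /\
  (forall W, Estar E W -> forall s, Suc s ->
     exists W', Estar E W' /\ match_GR W s W' /\ succ_bounded W s W') /\
  (forall W, Estar E W -> forall x z, W x z -> forall s, Sr s ->
     forall z', trans z s z' ->
     exists x' W', trans x s x' /\ Estar E W' /\ W' x' z' /\
       match_GR W s W' /\ succ_bounded W s W').
Proof.
move=> ctrl_E.
have uc_Estar := Estar_bounded_match ctrl_E.
have req_Estar := Estar_bounded_required ctrl_E.
split; last by split.
split.
- have [[W0 [EW0 init_W0]] _] := ctrl_E.
  by exists W0; split; first exact: Estar_self.
split.
- move=> W EW s uc_s.
  by have [W' [? [? _]]] := uc_Estar W EW s uc_s; exists W'.
- move=> W EW x z Wxz s r_s z' tz.
  by have [x' [W' [? [? [? [? _]]]]]] := req_Estar W EW x z Wxz s r_s z' tz; exists x', W'.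
Qed.
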